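(* Let $\mathcal{A}$ be a complex unital structurable algebra of type $(1,2)$. Then $\mathcal{A}$ is isomorphic (as an algebra with involution) to the universal unital algebra ${\rm S}_1$ of type $(1,2)$, or to the algebra ${\rm S}_2$ with basis $\{e_1,e_2,e_3\}$, unit $e_1$, involution $\overline{e_1}=e_1$, $\overline{e_2}=-e_2$, $\overline{e_3}=-e_3$, and multiplication (besides $e_1e_i=e_ie_1=e_i$; all unlisted products of basis elements zero) $e_2e_3=e_2$, $e_3e_2=-e_2$, $e_3e_3=e_1$.
   Context: An involution on an algebra $\mathcal{A}$ is a linear map $x\mapsto\overline{x}$ with $\overline{\overline{x}}=x$ and $\overline{xy}=\overline{y}\,\overline{x}$. For a unital algebra with involution write $\mathcal{A}=\mathcal{H}\oplus\mathcal{S}$ with $\mathcal{H}=\{a:\overline a=a\}$, $\mathcal{S}=\{a:\overline a=-a\}$; $\mathcal{A}$ is of type $(k,n-k)$ if $\dim\mathcal{A}=n$ and $\dim\mathcal{H}=k$. For $x,y\in\mathcal{A}$ define $V_{x,y}(z)=(x\overline{y})z+(z\overline{y})x-(z\overline{x})y$ and $T_x(z)=xz+zx-z\overline{x}$. A unital algebra with involution is structurable if $T_zV_{x,y}-V_{x,y}T_z=V_{T_z(x),y}-V_{x,T_{\overline z}(y)}$ for all $x,y,z$. An isomorphism of algebras with involution is a linear bijection $\varphi$ with $\varphi(xy)=\varphi(x)\varphi(y)$ and $\varphi(\overline x)=\overline{\varphi(x)}$. The universal unital algebra of type $(1,2)$ is the $3$-dimensional algebra with basis $e_1,e_2,e_3$,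 whose only nonzero products of basis elements are $e_1e_i=e_ie_1=e_i$, with involution $\overline{e_1}=e_1$, $\overline{e_2}=-e_2$, $\overline{e_3}=-e_3$. *)

From HB Require Import structures.
From mathcomp Require Import all_boot all_order all_algebra.
From mathcomp Require Import reals complex.
Set Implicit Arguments.
Unset Strict Implicit.
Unset Printing Implicit Defensive.
Import Order.TTheory GRing.Theory Num.Theory.
Local Open Scope ring_scope.

Section AlgInv.
Variables (C : fieldType) (V : vectType C).

Definition bilinear_mul (mul : V -> V -> V) : Prop :=
  (forall (a : C) (x y z : V), mul (a *: x + y) z = a *: mul x z + mul y z) /\
  (forall (a : C) (x y z : V), mul z (a *: x + y) = a *: mul z x + mul z y).

Definition is_unit_elt (mul : V -> V -> V) (one : V) : Prop :=
  forall x : V, mul one x = x /\ mul x one = x.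

Definition is_involution (mul : V -> V -> V) (bar : V -> V) : Prop :=
  [/\ forall (a : C) (x y : V), bar (a *: x + y) = a *: bar x + bar y,
      forall x : V, bar (bar x) = x &
      forall x y : V, bar (mul x y) = mul (bar y) (bar x)].

Definition herm_space (bar : V -> V) : {vspace V} :=
  lker (linfun (fun x : V => bar x - x)).

Definition Vop (mul : V -> V -> V) (bar : V -> V) (x y z : V) : V :=
  mul (mul x (bar y)) z + mul (mul z (bar y)) x - mul (mul z (bar x)) y.

Definition Top (mul : V -> V -> V) (bar : V -> V) (x z : V) : V :=
  mul x z + mul z x - mul z (bar x).

Definition structurable (mul : V -> V -> V) (bar : V -> V) : Prop :=
  forall x y z w : V,
    Top mul bar z (Vop mul bar x y w) - Vop mul bar x y (Top mul bar z w)
    = Vop mul bar (Top mul bar z x) y w - Vop mul bar x (Top mul bar (bar z) y) w.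

End AlgInv.

Definition alg_inv_iso (C : fieldType) (V W : vectType C)
  (mulV : V -> V -> V) (barV : V -> V) (mulW : W -> W -> W) (barW : W -> W) : Prop :=
  exists phi : V -> W,
    [/\ bijective phi,
        forall (a : C) (x y : V), phi (a *: x + y) = a *: phi x + phi y,
        forall x y : V, phi (mulV x y) = mulW (phi x) (phi y) &
        forall x : V, phi (barV x) = barW (phi x)].

(* Concrete 3-dimensional algebras on C^3 = 'rV[C]_3, basis e_1,e_2,e_3 being
   the standard basis vectors (indices 0,1,2). *)
Section Concrete.
Variable C : fieldType.

Definition ebase (i : 'I_3) : 'rV[C]_3 := delta_mx 0 i.

Definition table_mul (tbl : 'I_3 -> 'I_3 -> 'rV[C]_3) (x y : 'rV[C]_3) : 'rV[C]_3 :=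
  \sum_(i < 3) \sum_(j < 3) (x 0 i * y 0 j) *: tbl i j.

Definition i1 : 'I_3 := 0.
Definition i2 : 'I_3 := 1.
Definition i3 : 'I_3 := 2%:R.

Definition S1_tbl (i j : 'I_3) : 'rV[C]_3 :=
  if i == i1 then ebase j else if j == i1 then ebase i else 0.

Definition S2_tbl (i j : 'I_3) : 'rV[C]_3 :=
  if i == i1 then ebase j else if j == i1 then ebase i
  else if (i == i2) && (j == i3) then ebase i2
  else if (i == i3) && (j == i2) then - ebase i2
  else if (i == i3) && (j == i3) then ebase i1
  else 0.

Definition S1_mul := table_mul S1_tbl.
Definition S2_mul := table_mul S2_tbl.

Definition S_bar (x : 'rV[C]_3) : 'rV[C]_3 :=
  \row_i (if i == i1 then x 0 i else - x 0 i).

End Concrete.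

(* The hermitian part of A is the line spanned by 1, so A has a basis 1, s, t
   with s and t skew.  Squares of skew elements are hermitian, hence scalars, and
   t s is the involute of s t; so the multiplication is determined by five
   constants: s s = a, t t = c, s t = b + p s + q t and t s = b - p s - q t.
   The structurability identity at (x, y, z, w) = (s, t, s, 1) and (s, t, t, 1)
   forces a = q^2, c = p^2 and b = - p q.  If p = q = 0 the algebra is S1.
   Otherwise e2 = p s + q t squares to 0, and e3 = - s / q (or e3 = t / p when
   q = 0) satisfies e3 e3 = 1 and e2 e3 = e2 = - e3 e2, so the algebra is S2.
   No square roots are needed, so the classification holds over any field of
   characteristic 0. *)

From HB Require Import structures.
From mathcomp Require Import all_boot all_order all_algebra.
From mathcomp Require Import reals complex.
From mathcomp Require Import ring.
Import GRing.Theory Num.Theory.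
Set Implicit Arguments.
Unset Strict Implicit.
Local Open Scope ring_scope.

Lemma eq_of_natr_mul_sub {C : numDomainType} (n : nat) {x y u v : C} :
  (0 < n)%N -> u = v -> n%:R * (x - y) = u - v -> x = y.
Proof.
move=> n_gt0 -> /eqP; rewrite subrr mulf_eq0 pnatr_eq0 subr_eq0.
by rewrite eqn0Ngt n_gt0 => /eqP.
Qed.

Section CoordinateAlgebra.
Variable C : comNzRingType.
Local Notation T3 := (C * C * C)%type.
Implicit Types x y z w : T3.

Definition tadd x y : T3 :=
  let: (x0, x1, x2) := x in let: (y0, y1, y2) := y in (x0 + y0, x1 + y1, x2 + y2).
Definition topp x : T3 := let: (x0, x1, x2) := x in (- x0, - x1, - x2).
Definition tscale (k : C) x : T3 := let: (x0, x1, x2) := x in (k * x0, k * x1, k * x2).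
Definition tbar x : T3 := let: (x0, x1, x2) := x in (x0, - x1, - x2).

Variables (a b c p q : C).

(* [(x0, x1, x2)] stands for x0 + x1 s + x2 t, with the structure constants
   a, b, c, p, q of the multiplication table of s and t. *)
Definition tmul x y : T3 :=
  let: (x0, x1, x2) := x in let: (y0, y1, y2) := y in
  (x0 * y0 + a * x1 * y1 + b * (x1 * y2 + x2 * y1) + c * x2 * y2,
   x0 * y1 + x1 * y0 + (x1 * y2 - x2 * y1) * p,
   x0 * y2 + x2 * y0 + (x1 * y2 - x2 * y1) * q).

Definition tVop x y z : T3 :=
  tadd (tadd (tmul (tmul x (tbar y)) z) (tmul (tmul z (tbar y)) x))
       (topp (tmul (tmul z (tbar x)) y)).
Definition tTop x z : T3 := tadd (tadd (tmul x z) (tmul z x)) (topp (tmul z (tbar x))).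

Definition tstructurable : Prop :=
  forall x y z w,
    tadd (tTop z (tVop x y w)) (topp (tVop x y (tTop z w)))
    = tadd (tVop (tTop z x) y w) (topp (tVop x (tTop (tbar z) y) w)).

End CoordinateAlgebra.

Lemma tstructurable_constants (C : numDomainType) (a b c p q : C) :
  tstructurable a b c p q -> [/\ a = q ^+ 2, c = p ^+ 2 & b = - (p * q)].
Proof.
move=> str.
have [_ E1 E2] := str (0, 1, 0) (0, 0, 1) (0, 1, 0) (1, 0, 0).
have [_ E3 _] := str (0, 1, 0) (0, 0, 1) (0, 0, 1) (1, 0, 0).
split.
- by apply: (eq_of_natr_mul_sub (n := 6%N) isT E2); ring.
- by apply/esym/(eq_of_natr_mul_sub (n := 6%N) isT E3); ring.
- by apply/esym/(eq_of_natr_mul_sub (n := 6%N) isT E1); ring.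
Qed.

Lemma ord3P (k : 'I_3) : [\/ k = i1, k = i2 | k = i3].
Proof.
by case: k => [[|[|[|//]]] lt_k3]; [apply: Or31 | apply: Or32 | apply: Or33]; apply: val_inj.
Qed.

Lemma big_ord3 (M : nmodType) (G : 'I_3 -> M) : \sum_(i < 3) G i = G i1 + G i2 + G i3.
Proof.
by rewrite !big_ord_recl big_ord0 addr0 addrA; congr (G _ + G _ + G _); apply: val_inj.
Qed.

Section ChangeOfBasis.
Variable C : comNzRingType.
Variables (e1 e2 f1 f2 : C).

Definition tbasis (i : 'I_3) : C * C * C :=
  if i == i1 then (1, 0, 0) else if i == i2 then (0, e1, e2) else (0, f1, f2).

Definition tcomb (u : 'rV[C]_3) : C * C * C :=
  (u 0 i1, u 0 i2 * e1 + u 0 i3 * f1, u 0 i2 * e2 + u 0 i3 * f2).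

Definition tdecomp (y : C * C * C) : 'rV[C]_3 :=
  \row_k (if k == i1 then y.1.1 else if k == i2 then f2 * y.1.2 - f1 * y.2
          else e1 * y.2 - e2 * y.1.2).

Hypothesis det1 : e1 * f2 - f1 * e2 = 1.

Lemma tdecompK : cancel tdecomp tcomb.
Proof.
case=> [[y0 y1] y2]; rewrite /tcomb !mxE /=.
by congr (_, _, _); [rewrite -[RHS]mulr1 -det1 | rewrite -[RHS]mulr1 -det1]; ring.
Qed.

Lemma tcombK : cancel tcomb tdecomp.
Proof.
move=> u; apply/rowP => k; rewrite !mxE /=.
by case: (ord3P k) => -> //=; rewrite -[RHS]mulr1 -det1; ring.
Qed.

End ChangeOfBasis.

Lemma tmul_S1 (C : fieldType) (i j : 'I_3) :
  tmul 0 0 0 0 0 (tbasis 1 0 0 1 i) (tbasis 1 0 0 1 j) = tcomb 1 0 0 1 (S1_tbl C i j).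
Proof.
by case: (ord3P i) => ->; case: (ord3P j) => ->;
  rewrite /S1_tbl /ebase /tcomb /= ?mxE /=; congr (_, _, _); ring.
Qed.

Lemma tmul_S2_q (C : fieldType) (p q : C) (i j : 'I_3) : q != 0 ->
  tmul (q ^+ 2) (- (p * q)) (p ^+ 2) p q
    (tbasis p q (- q^-1) 0 i) (tbasis p q (- q^-1) 0 j)
  = tcomb p q (- q^-1) 0 (S2_tbl C i j).
Proof.
by move=> q0; case: (ord3P i) => ->; case: (ord3P j) => ->;
  rewrite /S2_tbl /ebase /tcomb /= ?mxE /=; congr (_, _, _); field.
Qed.

Lemma tmul_S2_p (C : fieldType) (p : C) (i j : 'I_3) : p != 0 ->
  tmul 0 0 (p ^+ 2) p 0 (tbasis p 0 0 p^-1 i) (tbasis p 0 0 p^-1 j)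
  = tcomb p 0 0 p^-1 (S2_tbl C i j).
Proof.
by move=> p0; case: (ord3P i) => ->; case: (ord3P j) => ->;
  rewrite /S2_tbl /ebase /tcomb /= ?mxE /=; congr (_, _, _); field.
Qed.

Lemma bilinear_mul_for (C : fieldType) (V : vectType C) (mul : V -> V -> V) :
  bilinear_mul mul -> bilinear_for *:%R *:%R mul.
Proof. by case=> mulPl mulPr; split=> u a x y; [apply: mulPl | apply: mulPr]. Qed.

Lemma eqNv (C : numFieldType) (V : lmodType C) (v : V) : (- v == v) = (v == 0).
Proof.
apply/eqP/eqP=> [Nvv | ->]; last by rewrite oppr0.
have /eqP : 2%:R *: v = 0 by rewrite scaler_nat mulr2n -{1}Nvv addNr.
by rewrite scaler_eq0 pnatr_eq0 => /eqP.
Qed.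

Section TableIsomorphism.
Variables (C : fieldType) (V : vectType C) (mul : V -> V -> V) (bar : V -> V).
Hypotheses (mul_bilin : bilinear_mul mul) (bar_lin : linear bar).
HB.instance Definition _ :=
  bilinear_isBilinear.Build C V V V *:%R *:%R mul (bilinear_mul_for mul_bilin).
HB.instance Definition _ := GRing.isLinear.Build C V V *:%R bar bar_lin.

Variables (tbl : 'I_3 -> 'I_3 -> 'rV[C]_3) (F : 'I_3 -> V) (phi : V -> 'rV[C]_3).

Definition comb3 (u : 'rV[C]_3) : V := \sum_i u 0 i *: F i.

Lemma comb3_is_linear : linear comb3.
Proof.
move=> a u v; rewrite /comb3 scaler_sumr -big_split /=; apply: eq_bigr => i _.
by rewrite !mxE scalerDl scalerA.
Qed.
HB.instance Definition _ := GRing.isLinear.Build C 'rV[C]_3 V *:%R comb3 comb3_is_linear.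

Hypotheses (comb3K : cancel comb3 phi) (phiK : cancel phi comb3).
Hypothesis mulF : forall i j, mul (F i) (F j) = comb3 (tbl i j).
Hypothesis barF : forall i, bar (F i) = if i == i1 then F i else - F i.

Lemma comb3_mul u v : comb3 (table_mul tbl u v) = mul (comb3 u) (comb3 v).
Proof.
rewrite linear_sum linear_sumlz; apply: eq_bigr => i _ /=.
rewrite linear_sum linearZl /= linear_sumr scaler_sumr; apply: eq_bigr => j _ /=.
by rewrite linearZ linearZr /= mulF scalerA.
Qed.

Lemma comb3_bar u : comb3 (S_bar u) = bar (comb3 u).
Proof.
rewrite /comb3 linear_sum; apply: eq_bigr => i _ /=.
by rewrite linearZ /= barF !mxE; case: (i == i1); rewrite ?scaleNr ?scalerN.
Qed.

Lemma iso_of_table_basis : alg_inv_iso mul bar (table_mul tbl) (@S_bar C).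
Proof.
exists phi; split; first by exists comb3.
- by move=> a x y; apply: (can_inj comb3K); rewrite linearP /= !phiK.
- by move=> x y; apply: (can_inj comb3K); rewrite comb3_mul !phiK.
- by move=> x; apply: (can_inj comb3K); rewrite comb3_bar !phiK.
Qed.

End TableIsomorphism.

Lemma unit_herm (C : fieldType) (V : vectType C) (mul : V -> V -> V) (bar : V -> V)
    (one : V) :
  is_unit_elt mul one -> is_involution mul bar -> bar one = one.
Proof.
move=> one_unit [_ barK bar_mul].
have bar1_unit x : mul (bar one) x = x.
  by rewrite -{1}(barK x) -bar_mul; case: (one_unit (bar x)) => _ ->.
by rewrite -[LHS](proj2 (one_unit _)) bar1_unit.
Qed.

Section Classification.
Variables (C : numFieldType) (V : vectType C) (mul : V -> V -> V) (bar : V -> V) (one : V).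
Hypotheses (mul_bilin : bilinear_mul mul) (one_unit : is_unit_elt mul one).
Hypothesis bar_inv : is_involution mul bar.

Let bar_lin : linear bar. Proof. by case: bar_inv. Qed.
Let barK : involutive bar. Proof. by case: bar_inv. Qed.
Let bar_mul x y : bar (mul x y) = mul (bar y) (bar x). Proof. by case: bar_inv. Qed.
Let mul1v x : mul one x = x. Proof. by case: (one_unit x). Qed.
Let mulv1 x : mul x one = x. Proof. by case: (one_unit x). Qed.

HB.instance Definition _ :=
  bilinear_isBilinear.Build C V V V *:%R *:%R mul (bilinear_mul_for mul_bilin).
HB.instance Definition _ := GRing.isLinear.Build C V V *:%R bar bar_lin.

Definition bar_sub_id (x : V) : V := bar x - x.

Lemma bar_sub_id_is_linear : linear bar_sub_id.
Proof. by move=> a x y; rewrite /bar_sub_id linearP scalerBr opprD addrACA. Qed.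
HB.instance Definition _ := GRing.isLinear.Build C V V *:%R bar_sub_id bar_sub_id_is_linear.

Lemma skew_basis :
  \dim (fullv : {vspace V}) = 3%N -> \dim (herm_space bar) = 1%N ->
  exists s t, [/\ basis_of fullv [tuple one; s; t], bar s = - s & bar t = - t].
Proof.
move=> dimV dimH.
pose L := limg (linfun bar_sub_id).
have dimL : \dim L = 2%N.
  by have := limg_ker_dim (linfun bar_sub_id) fullv; rewrite capfv dimV dimH => -[].
have skewL v : v \in L -> bar v = - v.
  by case/memv_imgP => u _ ->; rewrite lfunE /= /bar_sub_id linearB /= barK opprB.
have one_notin_L : one \notin L.
  apply/negP => /skewL; rewrite (unit_herm one_unit bar_inv) => /esym/eqP.
  rewrite eqNv => /eqP one0.
  have fullv0 : (fullv : {vspace V}) = 0%VS.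
    by apply/vspaceP => x; rewrite memvf memv0 -(mul1v x) one0 linear0l eqxx.
  by move: dimV; rewrite fullv0 dimv0.
move: (vbasis L : seq V) (vbasisP L) (size_tuple (vbasis L)); rewrite dimL.
case=> [|s [|t []]] // /andP[/eqP spanX freeX] _.
have sL : s \in L by rewrite -spanX memv_span // inE eqxx.
have tL : t \in L by rewrite -spanX memv_span // !inE eqxx orbT.
exists s, t; split; [|exact: skewL|exact: skewL].
by rewrite basisEfree /= free_cons spanX one_notin_L freeX subvf dimV.
Qed.

Section Coordinates.
Variables (s t : V).
Hypothesis basisB : basis_of fullv [tuple one; s; t].
Hypotheses (bar_s : bar s = - s) (bar_t : bar t = - t).
Local Notation B := [tuple one; s; t].

Definition tvec (x : C * C * C) : V :=
  let: (x0, x1, x2) := x in x0 *: one + x1 *: s + x2 *: t.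
Definition tcoord (v : V) : C * C * C := (coord B i1 v, coord B i2 v, coord B i3 v).

Lemma tcoordK : cancel tcoord tvec.
Proof.
by move=> v; rewrite [RHS](coord_basis basisB (memvf v)) big_ord3.
Qed.

Lemma tvecK : cancel tvec tcoord.
Proof.
have freeB := basis_free basisB.
case=> [[x0 x1] x2]; rewrite /tcoord /= !linearD !linearZ /=.
rewrite -[one]/(B`_i1) -[s]/(B`_i2) -[t]/(B`_i3) !coord_free //=.
by rewrite !mulr1 !mulr0 !addr0 !add0r.
Qed.

Lemma tcoord_add v w : tcoord (v + w) = tadd (tcoord v) (tcoord w).
Proof. by rewrite /tcoord !linearD. Qed.

Lemma tcoord_scale k v : tcoord (k *: v) = tscale k (tcoord v).
Proof. by rewrite /tcoord !linearZ. Qed.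

Lemma tvec_add x y : tvec (tadd x y) = tvec x + tvec y.
Proof. by apply: (can_inj tcoordK); rewrite tcoord_add !tvecK. Qed.

Lemma tvec_scale k x : tvec (tscale k x) = k *: tvec x.
Proof. by apply: (can_inj tcoordK); rewrite tcoord_scale !tvecK. Qed.

Lemma tvec_opp x : tvec (topp x) = - tvec x.
Proof. by rewrite -scaleN1r -tvec_scale; case: x => [[x0 x1] x2] /=; rewrite !mulN1r. Qed.

Lemma tvec_bar x : tvec (tbar x) = bar (tvec x).
Proof.
case: x => [[x0 x1] x2] /=.
by rewrite !linearD !linearZ /= (unit_herm one_unit bar_inv) bar_s bar_t !scalerN !scaleNr.
Qed.

Lemma tcoord_bar v : tcoord (bar v) = tbar (tcoord v).
Proof. by rewrite -{1}(tcoordK v) -tvec_bar tvecK. Qed.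

Lemma tcoord_herm v : bar v = v -> tcoord v = ((tcoord v).1.1, 0, 0).
Proof.
move=> bar_v; have := tcoord_bar v; rewrite bar_v.
case: (tcoord v) => [[x0 x1] x2] /= [/esym/eqP + /esym/eqP].
by rewrite !eqNr => /eqP -> /eqP ->.
Qed.

Lemma tcoord_one : tcoord one = (1, 0, 0).
Proof. by rewrite -[RHS](tvecK (1, 0, 0)) /= scale1r !scale0r !addr0. Qed.

Lemma tcoord_s : tcoord s = (0, 1, 0).
Proof. by rewrite -[RHS](tvecK (0, 1, 0)) /= scale1r !scale0r addr0 add0r. Qed.

Lemma tcoord_t : tcoord t = (0, 0, 1).
Proof. by rewrite -[RHS](tvecK (0, 0, 1)) /= scale1r !scale0r !add0r. Qed.

Definition ca := coord B i1 (mul s s).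
Definition cc := coord B i1 (mul t t).
Definition cb := coord B i1 (mul s t).
Definition cp := coord B i2 (mul s t).
Definition cq := coord B i3 (mul s t).

Lemma tcoord_ss : tcoord (mul s s) = (ca, 0, 0).
Proof. by apply: tcoord_herm; rewrite bar_mul bar_s linearNl linearNr opprK. Qed.

Lemma tcoord_tt : tcoord (mul t t) = (cc, 0, 0).
Proof. by apply: tcoord_herm; rewrite bar_mul bar_t linearNl linearNr opprK. Qed.

Lemma tcoord_st : tcoord (mul s t) = (cb, cp, cq).
Proof. by []. Qed.

Lemma tcoord_ts : tcoord (mul t s) = (cb, - cp, - cq).
Proof.
have -> : mul t s = bar (mul s t) by rewrite bar_mul bar_s bar_t linearNl linearNr opprK.
by rewrite tcoord_bar.
Qed.

Lemma tvec_mul x y : tvec (tmul ca cb cc cp cq x y) = mul (tvec x) (tvec y).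
Proof.
apply: (can_inj tcoordK); rewrite tvecK.
case: x => [[x0 x1] x2]; case: y => [[y0 y1] y2] /=.
rewrite !linearDl !linearDr !linearZl_LR !linearZr_LR /= !mul1v !mulv1.
rewrite !tcoord_add !tcoord_scale tcoord_ss tcoord_tt tcoord_st tcoord_ts.
rewrite tcoord_one tcoord_s tcoord_t /=.
(* Generalizing the constants keeps [ring] from reifying through the linear
   maps [coord B i] hidden in their definitions. *)
by move: ca cb cc cp cq => a b c p q; congr (_, _, _); ring.
Qed.

Lemma structurable_tstructurable :
  structurable mul bar -> tstructurable ca cb cc cp cq.
Proof.
move=> str x y z w; apply: (can_inj tvecK).
rewrite /tTop /tVop !(tvec_add, tvec_opp, tvec_mul, tvec_bar).
exact: str.
Qed.

Lemma iso_of_rebased_table tbl e1 e2 f1 f2 :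
  e1 * f2 - f1 * e2 = 1 ->
  (forall i j, tmul ca cb cc cp cq (tbasis e1 e2 f1 f2 i) (tbasis e1 e2 f1 f2 j)
               = tcomb e1 e2 f1 f2 (tbl i j)) ->
  alg_inv_iso mul bar (table_mul tbl) (@S_bar C).
Proof.
move=> det1 mul_tbasis.
pose F i := tvec (tbasis e1 e2 f1 f2 i).
have comb3E u : comb3 F u = tvec (tcomb e1 e2 f1 f2 u).
  rewrite /comb3 big_ord3 /F -!tvec_scale -!tvec_add; congr tvec => /=.
  by congr (_, _, _); ring.
pose phi v := tdecomp e1 e2 f1 f2 (tcoord v).
apply: (iso_of_table_basis mul_bilin bar_lin (F := F) (phi := phi)).
- by move=> u; rewrite /phi comb3E tvecK tcombK.
- by move=> v; rewrite /phi comb3E tdecompK // tcoordK.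
- by move=> i j; rewrite comb3E -mul_tbasis tvec_mul.
- move=> i; rewrite /F -tvec_bar -tvec_opp.
  by case: (ord3P i) => -> /=; rewrite oppr0.
Qed.

Theorem structurable_iso_S1_or_S2 : structurable mul bar ->
  alg_inv_iso mul bar (@S1_mul C) (@S_bar C) \/ alg_inv_iso mul bar (@S2_mul C) (@S_bar C).
Proof.
move=> str.
have [ha hc hb] := tstructurable_constants (structurable_tstructurable str).
have [q0 | q_neq0] := eqVneq cq 0.
- have [p0 | p_neq0] := eqVneq cp 0.
  + left; apply: (iso_of_rebased_table (e1 := 1) (e2 := 0) (f1 := 0) (f2 := 1)).
      by rewrite mulr1 mulr0 subr0.
    by move=> i j; rewrite ha hb hc p0 q0 expr0n /= mulr0 oppr0; apply: tmul_S1.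
  + right; apply: (iso_of_rebased_table (e1 := cp) (e2 := 0) (f1 := 0) (f2 := cp^-1)).
      by rewrite mulr0 subr0 mulfV.
    by move=> i j; rewrite ha hb hc q0 expr0n /= mulr0 oppr0; apply: tmul_S2_p.
- right; apply: (iso_of_rebased_table (e1 := cp) (e2 := cq) (f1 := - cq^-1) (f2 := 0)).
    by rewrite mulr0 sub0r mulNr opprK mulVf.
  by move=> i j; rewrite ha hb hc; apply: tmul_S2_q.
Qed.
End Coordinates.
End Classification.

Theorem mainTheorem2 (R : realType) (V : vectType R[i])
    (mul : V -> V -> V) (bar : V -> V) (one : V) :
  bilinear_mul mul ->
  is_unit_elt mul one ->
  is_involution mul bar ->
  \dim (fullv : {vspace V}) = 3%N ->
  \dim (herm_space bar) = 1%N ->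
  structurable mul bar ->
  alg_inv_iso mul bar (@S1_mul R[i]) (@S_bar R[i]) \/
  alg_inv_iso mul bar (@S2_mul R[i]) (@S_bar R[i]).
Proof.
move=> mul_bilin one_unit bar_inv dimV dimH.
have [s [t [basisB bar_s bar_t]]] := skew_basis mul_bilin one_unit bar_inv dimV dimH.
exact: (structurable_iso_S1_or_S2 mul_bilin one_unit bar_inv basisB bar_s bar_t).
Qed.
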